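(* Suppose that for every odd integer $n\ge 1$ and every integer $k\ge 0$ with $2^k<n<2^{k+1}$, there is an orientation of the $n$-cube in which every vertex has in-degree $n-2^k$ or $n$. Then for every positive integer $n$ and all integers $0\le a,b\le n$ for which there exist non-negative integers $s,t$ with $s+t=2^n$ and $as+bt=n2^{n-1}$, there is an orientation of the $n$-cube in which every vertex has in-degree $a$ or $b$.
   Context: The $n$-cube is the graph on binary $n$-tuples with edges between tuples differing in exactly one coordinate. An orientation assigns a direction to each edge; the in-degree of a vertex is the number of edges directed into it. *)

From mathcomp Require Import all_boot.
Set Implicit Arguments. Unset Strict Implicit. Unset Printing Implicit Defensive.

Definition cube (n : nat) : finType := {ffun 'I_n -> bool}.

Definition cube_adj (n : nat) (x y : cube n) : bool :=
  #|[set i : 'I_n | x i != y i]| == 1.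

(* An orientation of the n-cube is a relation o, where o x y means that the
   edge {x,y} is directed from x to y; every edge gets exactly one direction
   and only edges are directed. *)
Definition is_orientation (n : nat) (o : rel (cube n)) : Prop :=
  (forall x y : cube n, o x y -> cube_adj x y) /\
  (forall x y : cube n, cube_adj x y -> (o x y (+) o y x) = true).

Definition indeg (n : nat) (o : rel (cube n)) (v : cube n) : nat :=
  #|[set u : cube n | o u v]|.

From mathcomp Require Import all_boot zify.
Set Implicit Arguments. Unset Strict Implicit. Unset Printing Implicit Defensive.

(* Record an orientation by saying, for each vertex z and direction i, whether
   the edge of direction i at z points into z.  Realisable in-degree pairs are
   then closed under symmetry, complement (a, b) |-> (n - b, n - a), adding a
   regular factor, and scaling by r (send direction i of the r-fold cube to the
   block containing i and a vertex to the parities of its blocks).  From the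
   two counts of vertices one gets 2a <= n <= 2b and (b - a) | 2^(n-1) (n - 2a);
   so, after taking the complement if a + b > n, the cube splits as
   Q_(n-2a) x Q_(2a) with degree pairs (0, b - a) and (a, a).  The pair (0, G) on
   Q_N with G <= N <= 2G and G | 2^M N reduces, after dividing by gcd N G, to
   the pair (0, 2^k) on Q_m with m odd and 2^k < m < 2^(k+1): the hypothesis. *)

Definition flip n (z : cube n) (i : 'I_n) : cube n :=
  [ffun j => if j == i then ~~ z j else z j].

Lemma flipK n (z : cube n) i : flip (flip z i) i = z.
Proof. by apply/ffunP=> j; rewrite !ffunE; case: (j == i); rewrite ?negbK. Qed.

Lemma flip_inj n (z : cube n) : injective (flip z).
Proof.
move=> i j /ffunP /(_ i); rewrite !ffunE eqxx.
by case: eqP => [->|_]; case: (z i).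
Qed.

Lemma cube_adjP n (u v : cube n) : cube_adj u v <-> exists i, u = flip v i.
Proof.
split=> [/cards1P [i /setP Ei]|[i ->]].
  by exists i; apply/ffunP=> j; move: (Ei j); rewrite !inE ffunE;
    case: (j == i); case: (u j); case: (v j).
by apply/cards1P; exists i; apply/setP=> j; rewrite !inE ffunE;
  case: (j == i); case: (v j).
Qed.

Section InwardMaps.

Variable n : nat.
Implicit Types (D : cube n -> 'I_n -> bool) (o : rel (cube n)).

Definition antisymmetric D := forall z i, D (flip z i) i = ~~ D z i.

Definition inward_deg D z := \sum_(i < n) D z i.

Lemma inward_degE D z : inward_deg D z = #|[set i | D z i]|.
Proof.
rewrite /inward_deg -sum1_card [RHS]big_mkcond; apply: eq_bigr => i _.
by rewrite inE; case: (D z i).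
Qed.

Lemma indeg_flip o v : (forall u, o u v -> cube_adj u v) ->
  indeg o v = #|[set i | o (flip v i) v]|.
Proof.
move=> o_adj; rewrite /indeg -(card_imset _ (@flip_inj n v)).
apply: eq_card => u; rewrite inE; apply/idP/imsetP => [ouv|[i + ->]].
  by have [i Ei] := (cube_adjP u v).1 (o_adj u ouv); exists i; rewrite // inE -Ei.
by rewrite inE.
Qed.

Definition orientation_of D : rel (cube n) :=
  fun u v => [exists i, (u == flip v i) && D v i].

Lemma orientation_of_flip D v i : orientation_of D (flip v i) v = D v i.
Proof.
apply/existsP/idP => [[j /andP [/eqP /flip_inj -> //]]|Dvi].
by exists i; rewrite eqxx.
Qed.

Lemma orientation_ofP D : antisymmetric D -> is_orientation (orientation_of D).
Proof.
move=> Danti; split=> [x y /existsP [i /andP [/eqP -> _]]|x y /cube_adjP [i ->]].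
  by apply/cube_adjP; exists i.
rewrite orientation_of_flip -{2}(flipK y i) orientation_of_flip Danti.
by case: (D y i).
Qed.

Lemma indeg_orientation_of D v :
  indeg (orientation_of D) v = inward_deg D v.
Proof.
rewrite inward_degE indeg_flip => [|u /existsP [i /andP [/eqP -> _]]].
  by apply: eq_card => i; rewrite !inE orientation_of_flip.
by apply/cube_adjP; exists i.
Qed.

Lemma inward_of_orientation o : is_orientation o ->
  antisymmetric (fun v i => o (flip v i) v) /\
  forall v, indeg o v = inward_deg (fun v i => o (flip v i) v) v.
Proof.
move=> [o_adj o_xor]; split=> [z i|v].
  rewrite flipK; have /o_xor : cube_adj (flip z i) z by apply/cube_adjP; exists i.
  by case: (o (flip z i) z); case: (o z (flip z i)).
by rewrite inward_degE (indeg_flip (o_adj^~ v)); apply: eq_card => i; rewrite !inE.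
Qed.

End InwardMaps.

Definition orientable n a b := exists D : cube n -> 'I_n -> bool,
  antisymmetric D /\ forall z, inward_deg D z = a \/ inward_deg D z = b.

Lemma orientableP n a b : orientable n a b <->
  exists o : rel (cube n), is_orientation o /\
    forall v : cube n, indeg o v = a \/ indeg o v = b.
Proof.
split=> [[D [Danti Ddeg]]|[o [orient odeg]]].
  by exists (orientation_of D); split=> [|v]; rewrite ?indeg_orientation_of;
    [exact: orientation_ofP|exact: Ddeg].
have [Danti Ddeg] := inward_of_orientation orient.
by exists (fun v i => o (flip v i) v); split=> // v; rewrite -Ddeg.
Qed.

Lemma orientable_sym n a b : orientable n a b -> orientable n b a.
Proof. by move=> [D [Danti Ddeg]]; exists D; split=> // z; case: (Ddeg z); auto. Qed.

Lemma orientable_regularW n a b : orientable n a a -> orientable n b a.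
Proof. by move=> [D [Danti Ddeg]]; exists D; split=> // z; right; case: (Ddeg z). Qed.

Lemma orientable_compl n a b : orientable n a b -> orientable n (n - b) (n - a).
Proof.
move=> [D [Danti Ddeg]]; exists (fun z i => ~~ D z i); split=> [z i|z].
  by rewrite Danti.
have : inward_deg (fun z i => ~~ D z i) z + inward_deg D z = n.
  rewrite /inward_deg -big_split -[n in RHS]card_ord -sum1_card.
  by apply: eq_bigr => i _; case: (D z i).
by case: (Ddeg z) => ->; [right|left]; lia.
Qed.

Lemma orientable_cube1 : orientable 1 0 1.
Proof.
exists (fun (z : cube 1) i => z i); split=> [z i|z]; first by rewrite ffunE eqxx.
by rewrite /inward_deg big_ord1; case: (z ord0); auto.
Qed.

Lemma orientable_cube2 : orientable 2 1 1.
Proof.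
pose w (z : cube 2) := z ord0 (+) z ord_max.
exists (fun z i => if i == ord0 then w z else ~~ w z); split=> [z i|z].
  rewrite /w !ffunE; case: i => [[|[|//]] ?] /=;
    by case: (z ord0); case: (z ord_max).
by left; rewrite /inward_deg big_ord_recr big_ord1 /=; case: (w z).
Qed.

Section CubeProduct.

Variables p q : nat.

Definition cube_lpart (z : cube (p + q)) : cube p := [ffun j => z (lshift q j)].
Definition cube_rpart (z : cube (p + q)) : cube q := [ffun k => z (rshift p k)].

Lemma cube_lpart_flipl z j : cube_lpart (flip z (lshift q j)) = flip (cube_lpart z) j.
Proof. by apply/ffunP=> j'; rewrite !ffunE (inj_eq (@lshift_inj p q)). Qed.

Lemma cube_rpart_flipr z k : cube_rpart (flip z (rshift p k)) = flip (cube_rpart z) k.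
Proof. by apply/ffunP=> k'; rewrite !ffunE (inj_eq (@rshift_inj p q)). Qed.

Lemma orientable_add a b e :
  orientable p a b -> orientable q e e -> orientable (p + q) (a + e) (b + e).
Proof.
move=> [D1 [D1anti D1deg]] [D2 [D2anti D2deg]].
pose D z i := match split i with
              | inl j => D1 (cube_lpart z) j | inr k => D2 (cube_rpart z) k end.
exists D; split=> [z i|z].
  rewrite /D; case: split_ordP => [j|k] ->.
    by rewrite cube_lpart_flipl D1anti.
  by rewrite cube_rpart_flipr D2anti.
have -> : inward_deg D z = inward_deg D1 (cube_lpart z) + inward_deg D2 (cube_rpart z).
  rewrite /inward_deg big_split_ord /D.
  by congr (_ + _); apply: eq_bigr => i _; rewrite (unsplitK (inl _ _), unsplitK (inr _ _)).
have -> : inward_deg D2 (cube_rpart z) = e by case: (D2deg (cube_rpart z)).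
by case: (D1deg (cube_lpart z)) => ->; auto.
Qed.

End CubeProduct.

Section CubeBlowup.

Variables m r : nat.

Let card_blocks : #|{: 'I_m * 'I_r}| = m * r.
Proof. by rewrite card_prod !card_ord. Qed.

Definition block_index (i : 'I_(m * r)) : 'I_m * 'I_r :=
  enum_val (cast_ord (esym card_blocks) i).

Lemma block_index_bij : bijective block_index.
Proof.
exists (fun x => cast_ord card_blocks (enum_rank x)) => [i|x]; rewrite /block_index.
  by rewrite enum_valK cast_ordKV.
by rewrite cast_ordK enum_rankK.
Qed.

Definition block i := (block_index i).1.

Definition block_parity (z : cube (m * r)) : cube m :=
  [ffun j => odd (\sum_(i | block i == j) z i)].

Lemma block_parity_flip z i0 : block_parity (flip z i0) = flip (block_parity z) (block i0).
Proof.
apply/ffunP=> j; rewrite !ffunE.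
have [<-|Nj] := eqVneq (block i0) j; last first.
  congr odd; apply: eq_bigr => i /eqP bi; rewrite ffunE.
  by case: eqP => // ii0; move: Nj; rewrite -ii0 bi eqxx.
rewrite (bigD1 i0) // [in RHS](bigD1 i0) //= ffunE eqxx !oddD.
rewrite (eq_bigr (fun i => z i : nat)) => [|i /andP [_ /negbTE ni0]]; last first.
  by rewrite ffunE ni0.
by case: (z i0); rewrite /= ?negbK.
Qed.

Lemma sum_block (F : 'I_m -> nat) : \sum_(i < m * r) F (block i) = r * \sum_(j < m) F j.
Proof.
transitivity (\sum_(x : 'I_m * 'I_r) F x.1).
  by rewrite [RHS](reindex block_index) //; exact: onW_bij block_index_bij.
transitivity (\sum_(j < m) \sum_(k < r) F j); first by rewrite pair_big.
rewrite big_distrr /=; apply: eq_bigr => j _.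
by rewrite sum_nat_const card_ord mulnC.
Qed.

Lemma orientable_blowup a b : orientable m a b -> orientable (m * r) (r * a) (r * b).
Proof.
move=> [D [Danti Ddeg]]; exists (fun z i => D (block_parity z) (block i)).
split=> [z i|z]; first by rewrite block_parity_flip Danti.
rewrite /inward_deg (sum_block (fun j => D (block_parity z) j : nat)).
by case: (Ddeg (block_parity z)) => <-; auto.
Qed.

End CubeBlowup.

Lemma orientable_0_full n : orientable n 0 n.
Proof. by have := orientable_blowup n orientable_cube1; rewrite mul1n muln0 muln1. Qed.

Lemma orientable_half e : orientable (e.*2) e e.
Proof. by have := orientable_blowup e orientable_cube2; rewrite muln1 mul2n. Qed.

Section FromOddCubes.

Hypothesis odd_cube_orientation : forall n k : nat, odd n -> 2 ^ k < n < 2 ^ k.+1 ->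
  exists o : rel (cube n), is_orientation o /\
    forall v : cube n, indeg o v = n - 2 ^ k \/ indeg o v = n.

Lemma orientable_0_coprime m x M :
  coprime m x -> x %| 2 ^ M -> x < m < x.*2 -> orientable m 0 x.
Proof.
move=> co_mx /(dvdn_pfactor _ _ (isT : prime 2)) [k _ x_eq] /andP [lt_xm lt_mx2].
subst x.
have m_odd : odd m.
  case: k co_mx lt_xm lt_mx2 => [|k co_mx _ _]; first by rewrite expn0; lia.
  apply: contraLR co_mx; rewrite -dvdn2 => even_m; apply/negP => /eqP gcd1.
  have : 2 %| gcdn m (2 ^ k.+1) by rewrite dvdn_gcd even_m expnS dvdn_mulr.
  by rewrite gcd1.
have bounds : 2 ^ k < m < 2 ^ k.+1 by rewrite lt_xm expnS mul2n.
have /orientableP/orientable_compl := odd_cube_orientation m_odd bounds.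
by rewrite subnn subKn // ltnW.
Qed.

Lemma orientable_0_gap N G M :
  G <= N <= G.*2 -> G %| 2 ^ M * N -> orientable N 0 G.
Proof.
move=> /andP [le_GN le_NG2] dvd_G.
have [->|ne_NG] := eqVneq N G; first exact: orientable_0_full.
have [->|ne_NG2] := eqVneq N G.*2; first exact/orientable_regularW/orientable_half.
have r_gt0 : 0 < gcdn N G by rewrite gcdn_gt0; lia.
have [m Nm] : exists m, N = m * gcdn N G by exists (N %/ gcdn N G); rewrite divnK ?dvdn_gcdl.
have [x Gx] : exists x, G = x * gcdn N G by exists (G %/ gcdn N G); rewrite divnK ?dvdn_gcdr.
have co_mx : coprime m x.
  by rewrite /coprime -(eqn_pmul2r r_gt0) mul1n muln_gcdl -Nm -Gx.
move: (gcdn N G) r_gt0 Nm Gx => r r_gt0 Nm Gx; subst N G.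
have dvd_x : x %| 2 ^ M.
  rewrite -(@Gauss_dvdr x m) 1?coprime_sym // -(dvdn_pmul2r r_gt0).
  by rewrite (mulnC m) -mulnA.
rewrite [x * r]mulnC -(muln0 r); apply/orientable_blowup/(orientable_0_coprime co_mx dvd_x).
by apply/andP; split; nia.
Qed.

Lemma orientable_balanced n a b s t : 0 < n ->
  a <= b -> a + b <= n -> s + t = 2 ^ n -> a * s + b * t = n * 2 ^ n.-1 ->
  orientable n a b.
Proof.
move=> n_gt0 le_ab le_abn; rewrite -(prednK n_gt0) expnS prednK // => st count.
have P_gt0 : 0 < 2 ^ n.-1 by rewrite expn_gt0.
have le_bn : n <= b.*2 by nia.
have gap : (b - a) * t = (n - a.*2) * 2 ^ n.-1 by nia.
have gap_bounds : b - a <= n - a.*2 <= (b - a).*2 by apply/andP; split; lia.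
have gap_dvd : b - a %| 2 ^ n.-1 * (n - a.*2) by rewrite mulnC -gap dvdn_mulr.
have := orientable_add (orientable_0_gap gap_bounds gap_dvd) (orientable_half a).
by rewrite add0n !subnK // -mul2n; lia.
Qed.

Lemma orientable_of_counts n a b s t : 0 < n ->
  a <= n -> b <= n -> s + t = 2 ^ n -> a * s + b * t = n * 2 ^ n.-1 ->
  orientable n a b.
Proof.
move=> n_gt0; wlog le_ab : a b s t / a <= b.
  move=> oriented; have [le_ab|/ltnW le_ba] := leqP a b; first exact: oriented.
  move=> an bn st count.
  by apply/orientable_sym/(oriented b a t s) => //; rewrite addnC.
move=> an bn st count; have [le_abn|lt_n_ab] := leqP (a + b) n.
  exact: orientable_balanced n_gt0 le_ab le_abn st count.
rewrite -[a](subKn an) -[b](subKn bn); apply: orientable_compl.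
apply: (@orientable_balanced n _ _ t s n_gt0); [lia|lia|by rewrite addnC|].
have : (n - b) * t + (n - a) * s + (a * s + b * t) = n * (s + t) by nia.
by rewrite st count -(prednK n_gt0) expnS prednK //; lia.
Qed.

End FromOddCubes.

Theorem corollary3 :
  (forall n k : nat, odd n -> 2 ^ k < n < 2 ^ k.+1 ->
     exists o : rel (cube n), is_orientation o /\
       forall v : cube n, indeg o v = n - 2 ^ k \/ indeg o v = n) ->
  forall n a b : nat, 0 < n -> a <= n -> b <= n ->
    (exists s t : nat, s + t = 2 ^ n /\ a * s + b * t = n * 2 ^ (n - 1)) ->
    exists o : rel (cube n), is_orientation o /\
      forall v : cube n, indeg o v = a \/ indeg o v = b.
Proof.
move=> odd_cubes n a b n_gt0 an bn [s [t [st count]]].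
by apply/orientableP/(orientable_of_counts odd_cubes n_gt0 an bn st); rewrite -subn1.
Qed.
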